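(* Let $\mathbf{s}$ be any composition (finite tuple of positive integers) of weight $w$ and let $p$ be an odd prime. Then $$-S(\mathbf{s}^\ast;p-1)\equiv S(\mathbf{s};p-1)+p\sum_{\mathbf{t}\preceq\mathbf{s}}H(\mathbf{t}\sqcup(1);p-1)\pmod{p^2}.$$
   Context: For $\mathbf{s}=(s_1,\dots,s_l)$ and $N\ge0$: $H(\mathbf{s};N)=\sum_{1\le k_1<\dots<k_l\le N}k_1^{-s_1}\cdots k_l^{-s_l}$, $S(\mathbf{s};N)=\sum_{1\le k_1\le\dots\le k_l\le N}k_1^{-s_1}\cdots k_l^{-s_l}$. The weight of $\mathbf{s}$ is $s_1+\dots+s_l$. For $\mathbf{s}=(i_1,\dots,i_k)$ of weight $w$, let $P(\mathbf{s})=\{i_1,i_1+i_2,\dots,i_1+\dots+i_{k-1}\}\subseteq\{1,\dots,w-1\}$; $P$ is a bijection from compositions of $w$ to subsets of $\{1,\dots,w-1\}$, and $\mathbf{s}^\ast$ is the composition of $w$ with $P(\mathbf{s}^\ast)=\{1,\dots,w-1\}\setminus P(\mathbf{s})$. $\mathbf{t}\preceq\mathbf{s}$ means $\mathbf{t}$ is obtained from $\mathbf{s}$ by combining (adding) some groups of consecutive parts (including $\mathbf{t}=\mathbf{s}$). $\mathbf{t}\sqcup(1)$ is the tuple $\mathbf{t}$ with an entry $1$ appended at the end. Congruences of rationals with denominators prime to $p$ are in the usual $p$-integral sense. *)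

From mathcomp Require Import all_boot all_order all_algebra.
Set Implicit Arguments. Unset Strict Implicit. Unset Printing Implicit Defensive.
Import Order.TTheory GRing.Theory Num.Theory.
Local Open Scope ring_scope.

Definition composition (s : seq nat) : bool := all (fun i => (0 < i)%N) s.

Definition weight (s : seq nat) : nat := sumn s.

(* Hrec s m N = sum_{m < k_1 < ... < k_l <= N} k_1^{-s_1} ... k_l^{-s_l} *)
Fixpoint Hrec (s : seq nat) (m N : nat) : rat :=
  match s with
  | [::] => 1
  | a :: s' => \sum_(m.+1 <= k < N.+1) (k%:R ^- a) * Hrec s' k N
  end.

(* Srec s m N = sum_{m <= k_1 <= ... <= k_l <= N} k_1^{-s_1} ... k_l^{-s_l} *)
Fixpoint Srec (s : seq nat) (m N : nat) : rat :=
  match s with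
  | [::] => 1
  | a :: s' => \sum_(m <= k < N.+1) (k%:R ^- a) * Srec s' k N
  end.

Definition H (s : seq nat) (N : nat) : rat := Hrec s 0 N.
Definition S (s : seq nat) (N : nat) : rat := Srec s 1 N.

Definition Pset (s : seq nat) : seq nat :=
  [seq sumn (take i s) | i <- iota 1 (size s).-1].

(* The composition of w whose set of partial sums is the (increasing) list D
   of elements of {1,...,w-1}: consecutive differences of 0, D, w. *)
Definition comp_of_set (w : nat) (D : seq nat) : seq nat :=
  pairmap (fun x y => (y - x)%N) 0%N (rcons D w).

(* s^* : P(s^* ) = {1,...,w-1} \ P(s) *)
Definition dual (s : seq nat) : seq nat :=
  comp_of_set (weight s) [seq i <- iota 1 (weight s).-1 | i \notin Pset s].

(* All ways of splitting s into nonempty blocks of consecutive parts. *)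
Fixpoint groupings (s : seq nat) : seq (seq (seq nat)) :=
  match s with
  | [::] => [:: [::]]
  | a :: s' =>
      flatten [seq match g with
                   | [::] => [:: [:: [:: a]]]
                   | b :: g' => [:: [:: a] :: b :: g'; (a :: b) :: g']
                   end | g <- groupings s']
  end.

(* The list of all t with t ⪯ s (obtained by adding groups of consecutive
   parts of s, including t = s). *)
Definition coarsenings (s : seq nat) : seq (seq nat) :=
  [seq map sumn g | g <- groupings s].

(* Congruence of rationals modulo m (p-integral sense): m divides the
   numerator of x - y and the denominator of x - y is coprime to p. *)
Definition rat_congr (p m : nat) (x y : rat) : bool :=
  ((m%:Z %| numq (x - y))%Z && coprime `|denq (x - y)|%N p).

From mathcomp Require Import all_boot all_order all_algebra.
From mathcomp Require Import zify ring.
Set Implicit Arguments. Unset Strict Implicit. Unset Printing Implicit Defensive.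
Import GRing.Theory Num.Theory.
Local Open Scope ring_scope.

(* Let S_k(s) = S(s;k) - S(s;k-1) be the part of S(s;k) whose largest index is k.
   The duality acts on these by a binomial transform,
     S_n(s^* ) = sum_{k=1}^n (-1)^(k-1) C(n-1,k-1) S_k(s),
   proved by induction on the weight: appending a part 1 to s, resp. raising its
   last part, replaces S_k(s) by (1/k) sum_{i<=k} S_i(s), resp. by S_k(s)/k, and
   on the dual side it does the opposite, while the binomial transform exchanges
   these two operations.  Summing over n gives
   S(s^*;N) = sum_k (-1)^(k-1) C(N,k) S_k(s).  On the other side, sorting the
   chains k_1 <= ... <= k_l by which of the inequalities are equalities gives
   S(s;N) = sum_{t ⪯ s} H(t;N), whence sum_{t ⪯ s} H(t ⊔ (1);N) equals
   sum_k (H_N - H_k) S_k(s), H_k being the harmonic numbers.  The congruence then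
   follows termwise from (-1)^k C(p-1,k) = 1 - p H_k (mod p^2) and p | H_{p-1}. *)

(** * p-integral rationals *)

Section PIntegral.

Variable p : nat.

Definition pintegral (x : rat) : bool := coprime `|denq x|%N p.

Lemma pintegral_frac (a b : int) :
  b != 0 -> coprime `|b|%N p -> pintegral (a%:~R / b%:~R).
Proof.
rewrite /pintegral; case: divqP => [|k x k0]; first by rewrite eqxx.
by rewrite abszM coprimeMl => _ /andP[].
Qed.

Lemma pintegral_int (a : int) : pintegral a%:~R.
Proof. by rewrite /pintegral denq_int coprime1n. Qed.

Lemma pintegral_nat (n : nat) : pintegral n%:R.
Proof. exact: (pintegral_int n). Qed.

Lemma pintegralD x y : pintegral x -> pintegral y -> pintegral (x + y).
Proof.
move=> px py; rewrite -[x]divq_num_den -[y]divq_num_den.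
rewrite addf_div ?intr_eq0 ?denq_neq0 // -!intrM -intrD.
by apply: pintegral_frac; rewrite ?mulf_neq0 ?denq_neq0 // abszM coprimeMl; apply/andP.
Qed.

Lemma pintegralM x y : pintegral x -> pintegral y -> pintegral (x * y).
Proof.
move=> px py; rewrite -[x]divq_num_den -[y]divq_num_den mulf_div -!intrM.
by apply: pintegral_frac; rewrite ?mulf_neq0 ?denq_neq0 // abszM coprimeMl; apply/andP.
Qed.

Lemma pintegralN x : pintegral (- x) = pintegral x.
Proof. by rewrite /pintegral denqN. Qed.

Lemma pintegralB x y : pintegral x -> pintegral y -> pintegral (x - y).
Proof. by move=> px py; rewrite pintegralD ?pintegralN. Qed.

Lemma pintegralX x n : pintegral x -> pintegral (x ^+ n).
Proof.
by move=> px; elim: n => [|n IHn]; rewrite ?(pintegral_nat 1) // exprS pintegralM.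
Qed.

Lemma pintegral_inv_nat (k : nat) : coprime k p -> pintegral k%:R^-1.
Proof.
have [->|k0] := eqVneq k 0%N; first by rewrite invr0 (pintegral_nat 0).
move=> kp; rewrite -div1r -[k%:R]/(k%:Z%:~R) -[1]/(1%:~R).
by apply: pintegral_frac; rewrite ?eqz_nat.
Qed.

Lemma pintegral_sum (I : eqType) (r : seq I) (P : pred I) (F : I -> rat) :
  (forall i, i \in r -> P i -> pintegral (F i)) ->
  pintegral (\sum_(i <- r | P i) F i).
Proof.
move=> pF; rewrite big_seq_cond; elim/big_rec: _ => [|i x /andP[ri Pi] px].
  exact: (pintegral_nat 0).
by rewrite pintegralD ?pF.
Qed.

(* The factor p^e cannot cancel against a denominator prime to p. *)
Lemma rat_congr_pX e (x y z : rat) :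
  prime p -> pintegral z -> x - y = (p ^ e)%:R * z -> rat_congr p (p ^ e) x y.
Proof.
rewrite /rat_congr => pp pz ->.
have pe_den : coprime (absz ((p ^ e)%:Z * numq z)) (absz (denq z)).
  by rewrite abszM coprimeMl coprime_num_den coprimeXl // coprime_sym.
rewrite -[z]divq_num_den mulrA -[(p ^ e)%:R]/((p ^ e)%:Z%:~R) -intrM.
rewrite coprimeq_num // coprimeq_den // denq_eq0 /= gtr0_sg ?denq_gt0 // mul1r.
by rewrite dvdz_mulr ?dvdzz.
Qed.

End PIntegral.

Lemma coprime_prime_lt p k : prime p -> (0 < k < p)%N -> coprime k p.
Proof.
move=> pp /andP[k0 kp]; rewrite coprime_sym prime_coprime //.
by apply/negP => /(dvdn_leq k0); rewrite leqNgt kp.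
Qed.

(** * Harmonic numbers and binomial coefficients modulo p^2 *)

Definition harmonic (k : nat) : rat := \sum_(1 <= j < k.+1) j%:R^-1.

Lemma harmonicS k : harmonic k.+1 = harmonic k + k.+1%:R^-1.
Proof. by rewrite /harmonic big_nat_recr. Qed.

Lemma pintegral_harmonic p k : prime p -> (k < p)%N -> pintegral p (harmonic k).
Proof.
move=> pp kp; apply: pintegral_sum => j; rewrite mem_index_iota => jk _.
by apply/pintegral_inv_nat/coprime_prime_lt => //; lia.
Qed.

(* Pairing j with p - j gives 2 H_{p-1} = p * sum_j 1 / (j (p - j)). *)
Lemma harmonic_pred_prime p :
  prime p -> odd p -> exists2 h, pintegral p h & harmonic p.-1 = p%:R * h.
Proof.
move=> pp op; have p0 := prime_gt0 pp.
pose h : rat := \sum_(1 <= j < p) ((j * (p - j))%:R)^-1.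
exists (2%:R^-1 * h).
  apply: pintegralM; first by apply: pintegral_inv_nat; rewrite coprime2n.
  apply: pintegral_sum => j; rewrite mem_index_iota => jp _.
  by apply: pintegral_inv_nat; rewrite coprimeMl !coprime_prime_lt //; lia.
have H_rev : harmonic p.-1 = \sum_(1 <= j < p) (p - j)%:R^-1.
  rewrite /harmonic prednK // big_nat_rev.
  by apply: eq_big_nat => j _; rewrite add1n subSS.
have H_twice : 2%:R * harmonic p.-1 = p%:R * h.
  rewrite mulr2n mulrDl mul1r {2}H_rev /harmonic prednK // -big_split mulr_sumr /=.
  apply: eq_big_nat => j /andP[j1 jp].
  have j0 : j%:R != 0 :> rat by rewrite pnatr_eq0 -lt0n.
  have pj0 : (p - j)%:R != 0 :> rat by rewrite pnatr_eq0 -lt0n subn_gt0.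
  have -> : p%:R = j%:R + (p - j)%:R :> rat by rewrite -natrD subnKC // ltnW.
  by rewrite natrM; field; rewrite j0 pj0.
by rewrite mulrCA -H_twice mulKf // pnatr_eq0.
Qed.

Lemma bin_succ_ratio (F : numFieldType) n k :
  'C(n, k.+1)%:R = (n - k)%:R / k.+1%:R * 'C(n, k)%:R :> F.
Proof.
apply: (mulfI (_ : k.+1%:R != 0)); first by rewrite pnatr_eq0.
by rewrite -natrM mul_bin_left natrM mulrA mulrCA divff ?mulr1 // pnatr_eq0.
Qed.

Definition binom_defect p k : rat :=
  ((-1) ^+ k * 'C(p.-1, k)%:R - 1 + p%:R * harmonic k) / (p ^ 2)%:R.

Lemma binom_defectE p k : (0 < p)%N ->
  (-1) ^+ k * 'C(p.-1, k)%:R = 1 - p%:R * harmonic k + (p ^ 2)%:R * binom_defect p k.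
Proof.
move=> p0; rewrite /binom_defect mulrCA mulfV ?mulr1; first ring.
by rewrite pnatr_eq0 -lt0n expn_gt0 p0.
Qed.

Lemma binom_defectS p k : (k < p)%N ->
  binom_defect p k.+1 =
  binom_defect p k + (harmonic k - p%:R * binom_defect p k) / k.+1%:R.
Proof.
move=> kp; have p0 : (0 < p)%N by lia.
have p2 : (p ^ 2)%:R != 0 :> rat by rewrite pnatr_eq0 -lt0n expn_gt0 p0.
have sign_step : (-1) ^+ k.+1 * 'C(p.-1, k.+1)%:R =
    (1 - p%:R / k.+1%:R) * ((-1) ^+ k * 'C(p.-1, k)%:R) :> rat.
  rewrite bin_succ_ratio (_ : (p.-1 - k = p - k.+1)%N); last by lia.
  rewrite natrB // mulrBl divff ?pnatr_eq0 // exprS; ring.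
have := binom_defectE k.+1 p0.
rewrite sign_step binom_defectE // harmonicS => Ek1.
apply/(mulfI p2)/(addrI (1 - p%:R * (harmonic k + k.+1%:R^-1))).
rewrite -Ek1; ring.
Qed.

Lemma pintegral_binom_defect p k : prime p -> (k < p)%N -> pintegral p (binom_defect p k).
Proof.
move=> pp; elim: k => [|k IHk] kp.
  by rewrite /binom_defect /harmonic big_geq // bin0 !mulr0 !mul1r addr0 subrr mul0r
    (pintegral_nat _ 0).
rewrite binom_defectS 1?ltnW //; apply: pintegralD; first exact/IHk/ltnW.
apply: pintegralM; last by apply/pintegral_inv_nat/coprime_prime_lt.
apply: pintegralB; first by apply/pintegral_harmonic/ltnW.
by apply/pintegralM/IHk/ltnW; rewrite ?pintegral_nat.
Qed.

(** * S as a sum of H over coarsenings *)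

Section TriangularSums.

Variable V : nmodType.

Lemma exchange_big_nat_le (F : nat -> nat -> V) m n :
  \sum_(m <= j < n) \sum_(j <= i < n) F i j =
  \sum_(m <= i < n) \sum_(m <= j < i.+1) F i j.
Proof.
elim: n => [|n IHn]; first by rewrite !big_geq.
have [nm|mn] := ltnP n m; first by rewrite !big_geq.
rewrite big_nat_recr //= [RHS]big_nat_recr //= -IHn big_nat1.
rewrite [X in _ = _ + X]big_nat_recr //= addrA -big_split /=; congr (_ + _).
by apply: eq_big_nat => j /andP[_ jn]; rewrite big_nat_recr //= ltnW.
Qed.

Lemma exchange_big_nat_lt (F : nat -> nat -> V) m n :
  \sum_(m <= k < n) \sum_(k.+1 <= j < n) F k j =
  \sum_(m <= j < n) \sum_(m <= k < j) F k j.
Proof.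
elim: n => [|n IHn]; first by rewrite !big_geq.
have [nm|mn] := ltnP n m; first by rewrite !big_geq.
rewrite big_nat_recr //= [RHS]big_nat_recr //= -IHn [X in _ + X]big_geq // addr0.
by rewrite -big_split /=; apply: eq_big_nat => j /andP[_ jn]; rewrite big_nat_recr.
Qed.

End TriangularSums.

Lemma Srec_rcons s b m n :
  Srec (rcons s b) m n = \sum_(m <= k < n.+1) k%:R ^- b * Srec s m k.
Proof.
elim: s m => [|a s IHs] m /=; first by apply: eq_bigr => k _; rewrite mulr1.
under eq_bigr => j _ do rewrite IHs big_distrr /=.
rewrite exchange_big_nat_le; apply: eq_big_nat => k _; rewrite big_distrr /=.
by apply: eq_bigr => j _; rewrite !mulrA [_ * k%:R ^- b]mulrC.
Qed.

Lemma Hrec_rcons s b m n :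
  Hrec (rcons s b) m n = \sum_(m.+1 <= k < n.+1) k%:R ^- b * Hrec s m k.-1.
Proof.
elim: s m => [|a s IHs] m /=; first by apply: eq_bigr => k _; rewrite mulr1.
under eq_bigr => j _ do rewrite IHs big_distrr /=.
rewrite exchange_big_nat_lt; apply: eq_big_nat => k /andP[mk _]; rewrite big_distrr /=.
rewrite prednK; last exact: leq_ltn_trans mk.
by apply: eq_bigr => j _; rewrite !mulrA [_ * k%:R ^- b]mulrC.
Qed.

Definition add_head (c : nat) (s : seq nat) : seq nat :=
  if s is a :: s' then (c + a)%N :: s' else [::].

Lemma add_head0 s : add_head 0 s = s.
Proof. by case: s. Qed.

Definition coarsen_step (a : nat) (t : seq nat) : seq (seq nat) :=
  if t is b :: t' then [:: a :: b :: t'; (a + b)%N :: t'] else [:: [:: a]].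

Lemma coarsenings_cons a s :
  coarsenings (a :: s) = flatten [seq coarsen_step a t | t <- coarsenings s].
Proof.
rewrite /coarsenings /= map_flatten -map_comp; congr flatten.
by rewrite -map_comp; apply: eq_map => -[|b g] /=; rewrite addn0.
Qed.

Lemma coarsenings_cons_neq_nil a s t : t \in coarsenings (a :: s) -> t != [::].
Proof.
rewrite coarsenings_cons => /flattenP[u /mapP[[|b t'] _ ->]] /=.
  by rewrite inE => /eqP->.
by rewrite !inE => /orP[] /eqP->.
Qed.

Lemma Srec_cons2 a b s m N :
  Srec [:: a, b & s] m.+1 N =
  \sum_(m.+1 <= k < N.+1) k%:R ^- a * Srec (b :: s) k.+1 N +
  Srec ((a + b)%N :: s) m.+1 N.
Proof.
rewrite /= -big_split /=; apply: eq_big_nat => k /andP[_ kN].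
by rewrite big_ltn // mulrDr addrC mulrA -invfM -exprD.
Qed.

(* The shift c keeps the statement stable under merging the first two parts,
   which is what the induction needs. *)
Lemma Srec_add_head_coarsenings s c m N :
  Srec (add_head c s) m.+1 N = \sum_(t <- coarsenings s) Hrec (add_head c t) m N.
Proof.
elim: s c m => [|a s IHs] c m; first by rewrite /coarsenings /= big_seq1.
case: s IHs => [|b s] IHs; first by rewrite /coarsenings /= big_seq1 addn0.
rewrite coarsenings_cons big_flatten big_map.
have split_step t : t \in coarsenings (b :: s) ->
    \sum_(u <- coarsen_step a t) Hrec (add_head c u) m N =
    Hrec ((c + a)%N :: t) m N + Hrec (add_head (c + a) t) m N.
  case: t => [/coarsenings_cons_neq_nil|b' t _] //.
  by rewrite big_cons big_seq1; congr (_ + Hrec _ m N) => /=; rewrite addnA.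
rewrite (eq_big_seq _ split_step) big_split Srec_cons2.
congr (_ + _); last exact: IHs.
have IH0 k : Srec (b :: s) k.+1 N = \sum_(t <- coarsenings (b :: s)) Hrec t k N.
  by rewrite -{1}[b :: s]add_head0 IHs; under eq_bigr do rewrite add_head0.
transitivity (\sum_(m.+1 <= k < N.+1)
                \sum_(t <- coarsenings (b :: s)) k%:R ^- (c + a) * Hrec t k N).
  by apply: eq_bigr => k _; rewrite IH0 big_distrr.
by rewrite exchange_big.
Qed.

Lemma S_coarsenings s N : S s N = \sum_(t <- coarsenings s) H t N.
Proof.
rewrite /S -{1}[s]add_head0 Srec_add_head_coarsenings.
by under eq_bigr do rewrite add_head0.
Qed.

Lemma sum_coarsenings_H_rcons1 s N :
  \sum_(t <- coarsenings s) H (rcons t 1%N) N =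
  \sum_(1 <= j < N.+1) j%:R^-1 * S s j.-1.
Proof.
rewrite /H; under eq_bigr do rewrite Hrec_rcons.
by rewrite exchange_big; apply: eq_bigr => j _; rewrite -big_distrr expr1 S_coarsenings.
Qed.

(** * The dual composition *)

Section Duality.

Local Open Scope nat_scope.

Lemma Pset_rconsE s b :
  Pset (rcons s b) = [seq sumn (take i s) | i <- iota 1 (size s)].
Proof.
rewrite /Pset size_rcons /=; apply/eq_in_map => i; rewrite mem_iota => /andP[_ lt_i].
by rewrite -cats1 takel_cat // -ltnS -add1n.
Qed.

Lemma Pset_rcons_le s b x : x \in Pset (rcons s b) -> x <= sumn s.
Proof.
rewrite Pset_rconsE => /mapP[i _ ->].
by rewrite -{2}(cat_take_drop i s) sumn_cat leq_addr.
Qed.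

Lemma Pset_rcons s b : s != [::] -> Pset (rcons s b) = rcons (Pset s) (sumn s).
Proof.
move=> s0; rewrite Pset_rconsE /Pset.
have size_s : size s = (size s).-1 + 1 by rewrite addn1 prednK // lt0n size_eq0.
rewrite {1}size_s iotaD cats1 map_rcons; congr rcons.
by rewrite add1n -addn1 -size_s take_size.
Qed.

Lemma iota1_rcons n : 0 < n -> iota 1 n = rcons (iota 1 n.-1) n.
Proof. by case: n => // n _; rewrite -[n.+1]addn1 iotaD cats1 add1n addn1. Qed.

Lemma comp_of_setE w D :
  comp_of_set w D = rcons (pairmap (fun x y => y - x) 0 D) (w - last 0 D).
Proof. by rewrite /comp_of_set -cats1 pairmap_cat cats1. Qed.

Lemma dual_neq_nil s : dual s != [::].
Proof. by rewrite /dual comp_of_setE; case: pairmap. Qed.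

(* Raising the last part from b to b+1 leaves the partial sums unchanged and adds
   the old weight w to the complement, so the dual gains a final part 1. *)
Lemma dual_rconsS s b : 0 < b -> dual (rcons s b.+1) = rcons (dual (rcons s b)) 1.
Proof.
move=> b0; rewrite /dual /weight !sumn_rcons addnS /=.
set w := sumn s + b; have w0 : 0 < w by rewrite addn_gt0 b0 orbT.
rewrite (iota1_rcons w0) filter_rcons.
have -> : (w \notin Pset (rcons s b.+1)) = true.
  by apply/negP => /Pset_rcons_le; rewrite /w; lia.
by rewrite (Pset_rconsE s b.+1) -(Pset_rconsE s b) comp_of_setE last_rcons subSnn.
Qed.

(* Appending a part 1 adds the old weight w to the partial sums, so the
   complement is unchanged and only the last part of the dual grows. *)
Lemma dual_rcons1 s : composition s -> s != [::] ->
  exists u d, dual s = rcons u d /\ dual (rcons s 1) = rcons u d.+1.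
Proof.
move=> cs s0; rewrite /dual /weight sumn_rcons addn1 /=.
set w := sumn s; have w0 : 0 < w.
  by case: s s0 cs @w => [|a s] //= _ /andP[a0 _]; rewrite addn_gt0 a0.
rewrite (iota1_rcons w0) filter_rcons Pset_rcons // mem_rcons mem_head /=.
set D := [seq i <- iota 1 w.-1 | i \notin Pset s].
have -> : [seq i <- iota 1 w.-1 | i \notin rcons (Pset s) w] = D.
  apply: eq_in_filter => i; rewrite mem_iota mem_rcons in_cons => /andP[_ lt_iw].
  by rewrite add1n prednK // in lt_iw; rewrite ltn_eqF.
rewrite !comp_of_setE; do 2 eexists; split; first by [].
congr rcons; rewrite subSn //.
have : last 0 D \in 0 :: D by apply: mem_last.
rewrite in_cons => /predU1P[-> //|]; rewrite mem_filter mem_iota => /andP[_ /andP[_]].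
by rewrite add1n prednK // => /ltnW.
Qed.

End Duality.

(** * The binomial transform *)

Lemma hockey_stick k n : (\sum_(k.+1 <= j < n.+1) 'C(j.-1, k) = 'C(n, k.+1))%N.
Proof.
elim: n => [|n IHn]; first by rewrite big_geq.
have [le_kn|lt_nk] := leqP k.+1 n.+1; first by rewrite big_nat_recr //= IHn binS addnC.
by rewrite big_geq ?bin_small // ltnW.
Qed.

Section BinomialTransform.

Variable F : numFieldType.

Lemma bin_pred_div n k : (0 < k)%N -> (0 < n)%N ->
  'C(n.-1, k.-1)%:R / k%:R = 'C(n, k)%:R / n%:R :> F.
Proof.
move=> k0 n0; have := mul_bin_diag n k.-1; rewrite prednK // => diag.
by apply/eqP; rewrite eqr_div ?pnatr_eq0 -?lt0n // -!natrM mulnC diag mulnC.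
Qed.

Lemma sum_sign_bin_tail n i : (0 < i)%N -> (0 < n)%N -> (i <= n.+1)%N ->
  \sum_(i <= k < n.+1) (-1) ^+ k.-1 * 'C(n, k)%:R =
  (-1) ^+ i.-1 * 'C(n.-1, i.-1)%:R :> F.
Proof.
move=> i0; case: n => // n _ le_in.
pose g k : F := (-1) ^+ k.-1 * 'C(n, k.-1)%:R.
have telescope_g k : (0 < k)%N -> (-1) ^+ k.-1 * 'C(n.+1, k)%:R = - (g k.+1 - g k).
  by case: k => // k _; rewrite /g binS natrD exprS; ring.
rewrite (eq_big_nat _ _ (fun k ik => telescope_g k _)); last first.
  by move=> k /andP[ik _]; apply: leq_trans ik.
by rewrite sumrN telescope_sumr // /g /= bin_small ?prednK //; ring.
Qed.

Definition binomial_transform (f : nat -> F) n : F :=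
  \sum_(1 <= k < n.+1) (-1) ^+ k.-1 * 'C(n.-1, k.-1)%:R * f k.

Lemma eq_binomial_transform f g n :
  (forall k, (0 < k <= n)%N -> f k = g k) ->
  binomial_transform f n = binomial_transform g n.
Proof. by move=> fg; apply: eq_big_nat => k /andP[k0 kn]; rewrite fg ?k0. Qed.

Lemma sum_binomial_transform f n :
  \sum_(1 <= j < n.+1) binomial_transform f j =
  \sum_(1 <= k < n.+1) (-1) ^+ k.-1 * 'C(n, k)%:R * f k.
Proof.
rewrite /binomial_transform -exchange_big_nat_le; apply: eq_big_nat => k /andP[k0 _].
rewrite -big_distrl -big_distrr /= -natr_sum.
by have := hockey_stick k.-1 n; rewrite prednK // => ->.
Qed.

Lemma binomial_transform_avg f n : (0 < n)%N ->
  binomial_transform (fun k => k%:R^-1 * \sum_(1 <= i < k.+1) f i) n =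
  n%:R^-1 * binomial_transform f n.
Proof.
move=> n0; rewrite /binomial_transform.
under eq_bigr => k _ do rewrite mulrA big_distrr /=.
rewrite -exchange_big_nat_le big_distrr /=; apply: eq_big_nat => i /andP[i0 le_in].
rewrite -big_distrl -(sum_sign_bin_tail i0 n0 (ltnW le_in)) /= mulrA big_distrr /=.
congr (_ * _); apply: eq_big_nat => k /andP[ik _].
by rewrite -mulrA bin_pred_div ?(leq_trans i0 ik) //; ring.
Qed.

Lemma binomial_transform_div f n : (0 < n)%N ->
  binomial_transform (fun k => k%:R^-1 * f k) n =
  n%:R^-1 * \sum_(1 <= j < n.+1) binomial_transform f j.
Proof.
move=> n0; rewrite sum_binomial_transform big_distrr /=.
apply: eq_big_nat => k /andP[k0 _].
have k0F : k%:R != 0 :> F by rewrite pnatr_eq0 -lt0n.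
have n0F : n%:R != 0 :> F by rewrite pnatr_eq0 -lt0n.
have -> : 'C(n.-1, k.-1)%:R = 'C(n, k)%:R / n%:R * k%:R :> F.
  by rewrite -bin_pred_div // divfK.
by field; rewrite k0F n0F.
Qed.

Lemma binomial_transform_inv n : (0 < n)%N ->
  binomial_transform (fun k => k%:R^-1) n = n%:R^-1.
Proof.
move=> n0; have delta1_sum k : (0 < k)%N -> \sum_(1 <= i < k.+1) (i == 1%N)%:R = 1 :> F.
  move=> k0; rewrite big_ltn // big_nat_cond big1 ?addr0 // => i /andP[/andP[i1 _] _].
  by rewrite gtn_eqF.
transitivity (binomial_transform
                (fun k => k%:R^-1 * \sum_(1 <= i < k.+1) (i == 1%N)%:R) n).
  by apply: eq_binomial_transform => k /andP[k0 _]; rewrite delta1_sum ?mulr1.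
rewrite binomial_transform_avg // -[RHS]mulr1; congr (_ * _); rewrite -[RHS](delta1_sum n n0).
by apply: eq_big_nat => k /andP[k0 _]; case: eqP => [->|_]; rewrite ?mulr0 ?bin0 ?mulr1.
Qed.

End BinomialTransform.

(** * Duality as a binomial transform *)

Definition Sdiff (s : seq nat) (k : nat) : rat := S s k - S s k.-1.

Lemma Sdiff_rcons s c k : (0 < k)%N -> Sdiff (rcons s c) k = k%:R ^- c * S s k.
Proof.
by move=> k0; rewrite /Sdiff /S !Srec_rcons prednK // big_nat_recr //= addrAC subrr add0r.
Qed.

Lemma S_sum_Sdiff s n : s != [::] -> S s n = \sum_(1 <= k < n.+1) Sdiff s k.
Proof.
case: s => // a s _; rewrite big_add1 /Sdiff telescope_sumr //.
by rewrite [S _ 0]/S /= big_geq // subr0.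
Qed.

Lemma Sdiff_dual s n : composition s -> s != [::] -> (0 < n)%N ->
  Sdiff (dual s) n = binomial_transform (Sdiff s) n.
Proof.
move: {2}(weight s) (leqnn (weight s)) => w; elim: w s n => [|w IHw] s n.
  by case: s => //= a s; rewrite /weight /= leqn0 addn_eq0 => /andP[/eqP-> _] /andP[].
case/lastP: s => [//|s c]; rewrite /composition all_rcons /weight sumn_rcons.
move=> le_w /andP[c0 cs] _ n0; case: c c0 le_w => [//|[|b]] _ le_w.
- have [->|s0] := eqVneq s [::].
    have Sdiff1 k : (0 < k)%N -> Sdiff (rcons [::] 1%N) k = k%:R^-1.
      by move=> k0; rewrite Sdiff_rcons // expr1 /S /= mulr1.
    rewrite [dual _]/= -[[:: 1%N]]/(rcons [::] 1%N) Sdiff1 // -binomial_transform_inv //.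
    by apply: eq_binomial_transform => k /andP[k0 _]; rewrite Sdiff1.
  have [u [d [dual_s dual_s1]]] := dual_rcons1 cs s0.
  rewrite dual_s1 Sdiff_rcons // exprS invfM -mulrA -Sdiff_rcons // -dual_s IHw //;
    last by rewrite /weight; lia.
  rewrite -binomial_transform_avg //; apply: eq_binomial_transform => k /andP[k0 _].
  by rewrite Sdiff_rcons // expr1 S_sum_Sdiff.
- have le_w' : (weight (rcons s b.+1) <= w)%N by rewrite /weight sumn_rcons; lia.
  have cs' : composition (rcons s b.+1) by rewrite /composition all_rcons cs.
  rewrite dual_rconsS // Sdiff_rcons // expr1 S_sum_Sdiff ?dual_neq_nil //.
  rewrite (eq_binomial_transform (g := fun k => k%:R^-1 * Sdiff (rcons s b.+1) k));
    last by move=> k /andP[k0 _]; rewrite !Sdiff_rcons // exprS invfM mulrA.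
  rewrite binomial_transform_div //; congr (_ * _); apply: eq_big_nat => j /andP[j0 _].
  by apply: IHw => //; case: (s).
Qed.

Lemma S_dual s n : composition s -> s != [::] ->
  S (dual s) n = \sum_(1 <= k < n.+1) (-1) ^+ k.-1 * 'C(n, k)%:R * Sdiff s k.
Proof.
move=> cs s0; rewrite S_sum_Sdiff ?dual_neq_nil // -sum_binomial_transform.
by apply: eq_big_nat => j /andP[j0 _]; rewrite Sdiff_dual.
Qed.

Lemma sum_inv_S_pred s N : s != [::] ->
  \sum_(1 <= j < N.+1) j%:R^-1 * S s j.-1 =
  \sum_(1 <= k < N.+1) (harmonic N - harmonic k) * Sdiff s k.
Proof.
move=> s0; transitivity (\sum_(1 <= j < N.+1) \sum_(1 <= k < j) j%:R^-1 * Sdiff s k).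
  by apply: eq_big_nat => j /andP[j0 _]; rewrite S_sum_Sdiff // prednK // big_distrr.
rewrite -exchange_big_nat_lt; apply: eq_big_nat => k /andP[k0 kN].
by rewrite /harmonic (@big_cat_nat _ _ _ k.+1 1 N.+1) //= addrC addrK big_distrl.
Qed.

Lemma pintegral_Srec p s m n :
  prime p -> (0 < m)%N -> (n < p)%N -> pintegral p (Srec s m n).
Proof.
move=> pp; elim: s m => [|a s IHs] m m0 np /=; first exact: (pintegral_nat p 1).
apply: pintegral_sum => k; rewrite mem_index_iota => /andP[mk kn] _.
apply: pintegralM; last by apply: IHs => //; apply: leq_trans mk.
by rewrite -exprVn; apply/pintegralX/pintegral_inv_nat/coprime_prime_lt => //; lia.
Qed.

Lemma pintegral_Sdiff p s k : prime p -> (k < p)%N -> pintegral p (Sdiff s k).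
Proof.
by move=> pp kp; apply: pintegralB; apply: pintegral_Srec => //; lia.
Qed.

Theorem theorem2p11 (s : seq nat) (p : nat) :
  composition s -> s != [::] -> prime p -> odd p ->
  rat_congr p (p ^ 2)
    (- S (dual s) p.-1)
    (S s p.-1 + p%:R * \sum_(t <- coarsenings s) H (rcons t 1%N) p.-1).
Proof.
move=> cs s0 pp op; have p0 := prime_gt0 pp.
have [h ph harmonic_p] := harmonic_pred_prime pp op.
set N := p.-1; have Np : (N < p)%N by rewrite /N prednK.
apply: (@rat_congr_pX p 2 _ _
          (\sum_(1 <= k < N.+1) (binom_defect p k - h) * Sdiff s k) pp).
  apply: pintegral_sum => k; rewrite mem_index_iota => /andP[_ kN] _.
  have kp : (k < p)%N by apply: leq_trans Np.
  apply: pintegralM; last exact: pintegral_Sdiff.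
  by apply: pintegralB => //; apply: pintegral_binom_defect.
have sign_bin k : (0 < k)%N ->
    - ((-1) ^+ k.-1 * 'C(N, k)%:R) = 1 - p%:R * harmonic k + (p ^ 2)%:R * binom_defect p k.
  by case: k => // k _; rewrite -binom_defectE // exprS mulN1r mulNr.
rewrite S_dual // sum_coarsenings_H_rcons1 sum_inv_S_pred // (S_sum_Sdiff N s0).
rewrite harmonic_p !mulr_sumr -big_split /= -opprD -big_split -sumrN /=.
apply: eq_big_nat => k /andP[k0 _].
by rewrite opprD -mulNr sign_bin // natrX; ring.
Qed.
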